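(* Let $k$ be fixed and let $(P_n)_{n\in\mathbb N}$ be a sequence of orthogonal projections $P_n\in M_k\otimes M_n$ satisfying condition $\mathcal C_1$ with limiting function $f$. Then for any sequence of vectors $x_n\in\mathbb C^k\otimes\mathbb C^n$ with $x_nx_n^*\le P_n$, setting $X_n=\mathrm{Tr}_{\mathbb C^n}[x_nx_n^*]$, we have $$\limsup_{n\to\infty}\mathrm{Tr}[X_nA]\le f(A)\qquad\text{for all }A\in D_k.$$
   Context: $D_k=\{A\in M_k(\mathbb C): A\ge0,\ \mathrm{Tr}A=1\}$. A sequence of orthogonal projections $P_n\in M_k\otimes M_n$ satisfies condition $\mathcal C_m$ if for every $A\in D_k$ the $m$ largest eigenvalues $\lambda_1(P_n(A\otimes I_n)P_n)\ge\dots\ge\lambda_m(P_n(A\otimes I_n)P_n)$ converge as $n\to\infty$ to a common limit $f(A)$. $\mathrm{Tr}_{\mathbb C^n}$ denotes the partial trace over the second factor. *)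

From HB Require Import structures.
From mathcomp Require Import all_boot all_order all_algebra.
From mathcomp Require Import complex mxtens.
From mathcomp Require Import all_classical all_reals all_analysis.

Set Implicit Arguments.
Unset Strict Implicit.
Unset Printing Implicit Defensive.

Import Order.TTheory GRing.Theory Num.Theory numFieldNormedType.Exports.
Local Open Scope classical_set_scope.
Local Open Scope ring_scope.

Definition adjmx (R : rcfType) (m n : nat) (M : 'M[R[i]]_(m, n)) : 'M[R[i]]_(n, m) :=
  (map_mx (@conjc R) M)^T.

(* Positive semidefinite: Hermitian and u^* M u >= 0 (as a complex number,
   i.e. real and nonnegative) for every vector u. *)
Definition psdmx (R : rcfType) (m : nat) (M : 'M[R[i]]_m) : Prop :=
  adjmx M = M /\ forall u : 'cV[R[i]]_m, 0 <= (adjmx u *m M *m u) 0 0.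

Definition loewner_le (R : rcfType) (m : nat) (M N : 'M[R[i]]_m) : Prop :=
  psdmx (N - M).

Definition density (R : rcfType) (k : nat) (A : 'M[R[i]]_k) : Prop :=
  psdmx A /\ \tr A = 1.

Definition orthoproj (R : rcfType) (m : nat) (P : 'M[R[i]]_m) : Prop :=
  P *m P = P /\ adjmx P = P.

(* Largest eigenvalue lambda_1 of a (Hermitian) matrix: the supremum of its
   real eigenvalues (for Hermitian matrices, all eigenvalues are real). *)
Definition lambda_max (R : realType) (m : nat) (M : 'M[R[i]]_m) : R :=
  sup [set t : R | eigenvalue M (t%:C)%C].

(* Partial trace over the second tensor factor C^n of C^k (x) C^n,
   with the indexing convention of [tensmx] (first factor = C^k). *)
Definition ptrace2 (R : rcfType) (k n : nat) (M : 'M[R[i]]_(k * n)) : 'M[R[i]]_k :=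
  \matrix_(i, j) \sum_(l < n) M (mxtens_index (i, l)) (mxtens_index (j, l)).

Definition condC1 (R : realType) (k : nat) (P : forall n : nat, 'M[R[i]]_(k * n))
  (f : 'M[R[i]]_k -> R) : Prop :=
  forall A : 'M[R[i]]_k, density A ->
    lambda_max (P n *m (A *t (1%:M : 'M[R[i]]_n)) *m P n) @[n --> \oo] --> (f A : R).

From HB Require Import structures.
From mathcomp Require Import all_boot all_order all_algebra.
From mathcomp Require Import complex mxtens sesquilinear spectral.
From mathcomp Require Import all_classical all_reals all_analysis.
Import Order.TTheory GRing.Theory Num.Theory numFieldNormedType.Exports.
Local Open Scope classical_set_scope.
Local Open Scope ring_scope.

(* Since x_n x_n^* <= P_n, the vector x_n lies in the range of P_n and has
   norm at most 1.  Hence Tr[X_n A] = <x_n, (A (x) I) x_n> = <x_n, M_n x_n>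
   with M_n = P_n (A (x) I) P_n, which is at most the largest eigenvalue of the
   positive matrix M_n: diagonalizing M_n, its Rayleigh quotient is bounded by
   its largest eigenvalue.  These eigenvalues converge to f(A) by C_1, so the
   limsup of Tr[X_n A] is at most f(A). *)

Set Implicit Arguments.
Unset Strict Implicit.
Unset Printing Implicit Defensive.

Lemma big_mxtens_index (V : nmodType) k n (F : 'I_(k * n) -> V) :
  \sum_a F a = \sum_i \sum_l F (mxtens_index (i, l)).
Proof.
rewrite pair_big (reindex (@mxtens_index k n)) /=; last first.
  by exists (@mxtens_unindex k n) => a _; [exact: mxtens_indexK|exact: mxtens_unindexK].
by apply: eq_bigr => -[i l].
Qed.

Section Adjoint.
Variable R : rcfType.
Local Notation C := R[i].
Local Notation Re := (@complex.Re R).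

Lemma adjmx_trC m n (M : 'M[C]_(m, n)) : adjmx M = map_mx Num.conj (M ^T).
Proof. by rewrite /adjmx map_trmx. Qed.

Lemma adjmxE m n (M : 'M[C]_(m, n)) i j : adjmx M i j = (M j i)^*.
Proof. by rewrite /adjmx !mxE. Qed.

Lemma adjmxK m n (M : 'M[C]_(m, n)) : adjmx (adjmx M) = M.
Proof. by apply/matrixP => i j; rewrite !adjmxE conjCK. Qed.

Lemma adjmx_eq0 m n (M : 'M[C]_(m, n)) : (adjmx M == 0) = (M == 0).
Proof.
have adjmx0 p q : adjmx (0 : 'M[C]_(p, q)) = 0.
  by apply/matrixP => i j; rewrite adjmxE !mxE conjC0.
by rewrite -(inj_eq (can_inj (@adjmxK _ _))) adjmxK adjmx0.
Qed.

Lemma adjmxD m n (A B : 'M[C]_(m, n)) : adjmx (A + B) = adjmx A + adjmx B.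
Proof. by apply/matrixP => i j; rewrite !mxE rmorphD. Qed.

Lemma adjmxM m n p (A : 'M[C]_(m, n)) (B : 'M[C]_(n, p)) :
  adjmx (A *m B) = adjmx B *m adjmx A.
Proof. by rewrite /adjmx map_mxM trmx_mul. Qed.

Lemma adjmx1 m : adjmx (1%:M : 'M[C]_m) = 1%:M.
Proof. by rewrite /adjmx map_mx1 trmx1. Qed.

Lemma adjmx_tens m n p q (A : 'M[C]_(m, n)) (B : 'M[C]_(p, q)) :
  adjmx (A *t B) = adjmx A *t adjmx B.
Proof. by rewrite /adjmx map_mxT trmx_tens. Qed.

Definition qform m (M : 'M[C]_m) (u : 'cV[C]_m) : C := (adjmx u *m M *m u) 0 0.

Lemma qformE m (M : 'M[C]_m) u :
  qform M u = \sum_a \sum_b (u a 0)^* * M a b * u b 0.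
Proof.
rewrite /qform mxE exchange_big; apply: eq_bigr => b _; rewrite mxE big_distrl.
by apply: eq_bigr => a _; rewrite adjmxE.
Qed.

Lemma qformB m (M N : 'M[C]_m) u : qform (M - N) u = qform M u - qform N u.
Proof. by rewrite /qform mulmxBr mulmxBl mxE [_ (- _) 0 0]mxE. Qed.

Lemma qform_adjM m n (M : 'M[C]_n) (B : 'M[C]_(n, m)) u :
  qform (adjmx B *m M *m B) u = qform M (B *m u).
Proof. by rewrite /qform adjmxM !mulmxA. Qed.

Lemma qform_rank1 m (x u : 'cV[C]_m) :
  qform (x *m adjmx x) u = `|(adjmx x *m u) 0 0| ^+ 2.
Proof.
rewrite /qform !mulmxA -(mulmxA _ (adjmx x)) mxE big_ord1 normCK mulrC.
by rewrite -[adjmx u *m x]adjmxK adjmxM adjmxK adjmxE.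
Qed.

Lemma qform1E m (u : 'cV[C]_m) : qform 1%:M u = dotmx (adjmx u) (adjmx u).
Proof. by rewrite /qform mulmx1 dotmxE -adjmx_trC adjmxK. Qed.

Lemma qform1_ge0 m (u : 'cV[C]_m) : 0 <= qform 1%:M u.
Proof. by rewrite qform1E dnorm_ge0. Qed.

Lemma qform1_eq0 m (u : 'cV[C]_m) : (qform 1%:M u == 0) = (u == 0).
Proof. by rewrite qform1E dnorm_eq0 adjmx_eq0. Qed.

Lemma qform1_gt0 m (u : 'cV[C]_m) : (0 < qform 1%:M u) = (u != 0).
Proof. by rewrite qform1E dnorm_gt0 adjmx_eq0. Qed.

Lemma qform_diag m (d : 'rV[C]_m) y :
  qform (diag_mx d) y = \sum_i d 0 i * `|y i 0| ^+ 2.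
Proof.
rewrite /qform mxE; apply: eq_bigr => i _.
by rewrite mul_mx_diag !mxE normCK mulrAC mulrC [_ * y i 0]mulrC.
Qed.

Lemma qform_diag_le m (d : 'rV[C]_m) c y : (forall i, d 0 i <= c) ->
  qform (diag_mx d) y <= c * qform 1%:M y.
Proof.
move=> le_dc; rewrite -diag_const_mx !qform_diag mulr_sumr.
by apply: ler_sum => i _; rewrite mxE mul1r ler_wpM2r ?exprn_ge0.
Qed.

Lemma qform_eigen m (M : 'M[C]_m) (v : 'rV[C]_m) a : v *m M = a *: v ->
  qform M (adjmx v) = a * qform 1%:M (adjmx v).
Proof. by rewrite /qform adjmxK mulmx1 => ->; rewrite -scalemxAl mxE. Qed.

Lemma psdmx_adjM m n (M : 'M[C]_n) (B : 'M[C]_(n, m)) :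
  psdmx M -> psdmx (adjmx B *m M *m B).
Proof.
move=> [MA M_ge0]; split; first by rewrite !adjmxM adjmxK MA mulmxA.
by move=> u; rewrite -/(qform _ u) qform_adjM; apply: M_ge0.
Qed.

Lemma eigenvalue_psd_ge0 m (M : 'M[C]_m) a : psdmx M -> eigenvalue M a -> 0 <= a.
Proof.
move=> [_ M_ge0] /eigenvalueP [v vM v_neq0].
have := M_ge0 (adjmx v); rewrite -/(qform _ _) (qform_eigen vM).
by rewrite pmulr_lge0 // qform1_gt0 adjmx_eq0.
Qed.

Lemma loewner_rank1_proj m (P : 'M[C]_m) (x : 'cV[C]_m) :
  orthoproj P -> loewner_le (x *m adjmx x) P -> P *m x = x /\ qform 1%:M x <= 1.
Proof.
move=> [PP PA] [_ le_xP].
have Px_x : P *m x = x.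
  (* for y = x - P x, <y, (P - x x^* ) y> = - |<x, y>|^2 = - |y|^4 *)
  pose y := x - P *m x.
  have Py0 : P *m y = 0 by rewrite mulmxBr mulmxA PP subrr.
  have xy : (adjmx x *m y) 0 0 = qform 1%:M y.
    rewrite /qform mulmx1 -{1}(subrK (P *m x) x) -/y adjmxD mulmxDl adjmxM PA.
    by rewrite -mulmxA Py0 mulmx0 addr0.
  have : 0 <= qform (P - x *m adjmx x) y := le_xP y.
  rewrite qformB qform_rank1 xy {1}/qform -mulmxA Py0 mulmx0 mxE sub0r oppr_ge0.
  move=> le0; have : `|qform 1%:M y| ^+ 2 == 0 by rewrite eq_le le0 exprn_ge0.
  by rewrite expf_eq0 normr_eq0 qform1_eq0 subr_eq0 => /eqP.
split => //; have : 0 <= qform (P - x *m adjmx x) x := le_xP x.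
have nE : (adjmx x *m x) 0 0 = qform 1%:M x by rewrite /qform mulmx1.
rewrite qformB qform_rank1 {1}/qform -mulmxA Px_x nE.
have := qform1_ge0 x; rewrite le_eqVlt => /orP [/eqP <- _|n_gt0]; first exact: ler01.
rewrite (ger0_norm (ltW n_gt0)) -[X in X - _]mulr1 expr2 -mulrBr.
by rewrite pmulr_rge0 // subr_ge0.
Qed.

Definition tens_slice k n (v : 'cV[C]_(k * n)) (l : 'I_n) : 'cV[C]_k :=
  \col_i v (mxtens_index (i, l)) 0.

Lemma qform_tens1 k n (A : 'M[C]_k) (v : 'cV[C]_(k * n)) :
  qform (A *t 1%:M) v = \sum_l qform A (tens_slice v l).
Proof.
rewrite qformE big_mxtens_index exchange_big; apply: eq_bigr => l _.
rewrite qformE; apply: eq_bigr => i _; rewrite big_mxtens_index.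
apply: eq_bigr => j _; rewrite (bigD1 l) //= big1 ?addr0 => [|l' nl'].
  by rewrite tensmxE !mxE eqxx mulr1.
by rewrite tensmxE !mxE eq_sym (negbTE nl') mulr0 mulr0 mul0r.
Qed.

Lemma mxtrace_ptrace2 k n (A : 'M[C]_k) (v : 'cV[C]_(k * n)) :
  \tr (ptrace2 (v *m adjmx v) *m A) = \sum_l qform A (tens_slice v l).
Proof.
under [RHS]eq_bigr => l _ do rewrite qformE.
rewrite [RHS]exchange_big /mxtrace; under [LHS]eq_bigr => a _ do rewrite mxE.
rewrite [LHS]exchange_big; apply: eq_bigr => j _.
under [LHS]eq_bigr => a _ do rewrite mxE big_distrl.
rewrite [LHS]exchange_big; apply: eq_bigr => l _; apply: eq_bigr => a _ /=.
by rewrite !mxE big_ord1 adjmxE -mulrA mulrC.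
Qed.

Lemma psdmx_tens1 k n (A : 'M[C]_k) : psdmx A -> psdmx (A *t (1%:M : 'M[C]_n)).
Proof.
move=> [AA A_ge0]; split; first by rewrite adjmx_tens AA adjmx1.
by move=> v; rewrite -/(qform _ v) qform_tens1; apply: sumr_ge0 => l _; exact: A_ge0.
Qed.

Lemma hermitian_rayleigh_max m (M : 'M[C]_m.+1) : adjmx M = M ->
  exists d : R, eigenvalue M d%:C%C /\ forall u, qform M u <= d%:C%C * qform 1%:M u.
Proof.
(* M = U^* D U with U unitary and D real; the largest entry of D works. *)
move=> MA; set U := spectralmx M; set D := spectral_diag M.
have hermM : M \is hermsymmx.
  by apply/is_hermitianmxP; rewrite expr0 scale1r -{1}MA adjmx_trC.
have UU : adjmx U *m U = 1%:M.
  by rewrite adjmx_trC -invmx_unitary ?spectral_unitarymx ?mulVmx ?spectral_unit.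
have UU' : U *m adjmx U = 1%:M.
  by rewrite adjmx_trC; apply/unitarymxP/spectral_unitarymx.
have M_UDU : M = adjmx U *m diag_mx D *m U.
  rewrite adjmx_trC -invmx_unitary ?spectral_unitarymx //.
  exact/orthomx_spectralP/hermitian_normalmx.
have D_real i : (Re (D 0 i))%:C%C = D 0 i.
  by apply: RRe_real; exact: (mxOverP (hermitian_spectral_diag_real hermM)).
clearbody U D.
have [i0 _ D_max] := @arg_maxP _ _ _ ord0 xpredT (fun i => Re (D 0 i)) isT.
exists (Re (D 0 i0)); split.
  apply/eigenvalueP; exists (delta_mx 0 i0 *m U).
    rewrite {1}M_UDU !mulmxA -(mulmxA (delta_mx 0 i0)) UU' mulmx1 -rowE.
    by rewrite row_diag_mx -scalemxAl D_real.
  rewrite mulmx_free_eq0; last by rewrite row_free_unit; case: (mulmx1_unit UU).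
  by apply/negP => /eqP/matrixP/(_ 0 i0); rewrite !mxE !eqxx => /eqP; rewrite oner_eq0.
move=> u; have -> : qform 1%:M u = qform 1%:M (U *m u) by rewrite -qform_adjM mulmx1 UU.
rewrite M_UDU qform_adjM; apply: qform_diag_le => i.
by rewrite -(D_real i) lecR; apply: D_max.
Qed.

End Adjoint.

Section LambdaMax.
Variable R : realType.
Local Notation C := R[i].

Lemma lambda_maxE m (M : 'M[C]_m) (d : R) : eigenvalue M d%:C%C ->
  (forall u, qform M u <= d%:C%C * qform 1%:M u) -> lambda_max M = d.
Proof.
move=> eig_d rayleigh.
have d_ub : ubound [set t : R | eigenvalue M t%:C%C] d.
  move=> t /eigenvalueP [v vM v_neq0]; have := rayleigh (adjmx v).
  by rewrite (qform_eigen vM) ler_pM2r ?lecR // qform1_gt0 adjmx_eq0.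
apply/le_anti; rewrite ge_sup //=; last by exists d.
by apply: ub_le_sup => //; exists d.
Qed.

Lemma qform_le_lambda_max m (M : 'M[C]_m) u : adjmx M = M ->
  qform M u <= (lambda_max M)%:C%C * qform 1%:M u.
Proof.
case: m M u => [|m] M u MA; first by rewrite [u]flatmx0 /qform !mulmx0 mxE mulr0.
have [d [eig_d rayleigh]] := hermitian_rayleigh_max MA.
by rewrite (lambda_maxE eig_d rayleigh).
Qed.

Lemma lambda_max_ge0 m (M : 'M[C]_m) : psdmx M -> 0 <= lambda_max M.
Proof.
case: m M => [|m] M psdM.
  (* no eigenvalues in dimension 0, and [sup set0 = 0] *)
  rewrite /lambda_max (_ : [set _ | _] = set0) ?sup0 //.
  by apply/seteqP; split => // t /eigenvalueP [v _]; rewrite [v]thinmx0 eqxx.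
have [d [eig_d rayleigh]] := hermitian_rayleigh_max psdM.1.
by rewrite (lambda_maxE eig_d rayleigh) -ler0c (eigenvalue_psd_ge0 psdM eig_d).
Qed.

Lemma Re_tr_ptrace2_le_lambda_max k n (A : 'M[C]_k) (P : 'M[C]_(k * n))
  (x : 'cV[C]_(k * n)) :
  psdmx A -> orthoproj P -> loewner_le (x *m adjmx x) P ->
  complex.Re (\tr (ptrace2 (x *m adjmx x) *m A)) <=
    lambda_max (P *m (A *t 1%:M) *m P).
Proof.
move=> psdA projP le_xP; have [Px_x x_le1] := loewner_rank1_proj projP le_xP.
have psdM : psdmx (P *m (A *t 1%:M) *m P).
  by rewrite -{1}projP.2; apply/psdmx_adjM/psdmx_tens1.
suff : \tr (ptrace2 (x *m adjmx x) *m A) <= (lambda_max (P *m (A *t 1%:M) *m P))%:C%C.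
  by rewrite lecE => /andP [].
rewrite mxtrace_ptrace2 -qform_tens1 -{1}Px_x -qform_adjM projP.2.
apply: le_trans (qform_le_lambda_max x psdM.1) _.
by rewrite ler_piMr ?ler0c ?lambda_max_ge0.
Qed.

End LambdaMax.

Lemma limn_esup_le_cvg_bound (R : realType) (u v : (\bar R)^nat) (l : \bar R) :
  (forall n, (u n <= v n)%E) -> v @ \oo --> l -> (limn_esup u <= l)%E.
Proof.
move=> le_uv /cvg_limn_einf_sup [_ <-]; rewrite !limn_esup_lim.
apply: lee_lim; [exact: is_cvg_esups|exact: is_cvg_esups|].
apply: nearW => n; apply: ge_ereal_sup => _ [m nm <-].
by apply: le_trans (le_uv m) _; apply: ereal_sup_ubound; exists m.
Qed.

Theorem lemma3p5 (R : realType) (k : nat)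
  (P : forall n : nat, 'M[R[i]]_(k * n)) (f : 'M[R[i]]_k -> R)
  (HP : forall n, orthoproj (P n))
  (HC1 : condC1 P f)
  (x : forall n : nat, 'cV[R[i]]_(k * n))
  (Hx : forall n, loewner_le (x n *m adjmx (x n)) (P n)) :
  forall A : 'M[R[i]]_k, density A ->
    (limn_esup (fun n => (@complex.Re R (\tr (ptrace2 (x n *m adjmx (x n)) *m A)))%:E)
      <= (f A)%:E)%E.
Proof.
move=> A densA.
apply: (limn_esup_le_cvg_bound (v := fun n =>
  (lambda_max (P n *m (A *t (1%:M : 'M[R[i]]_n)) *m P n))%:E)).
  by move=> n; rewrite lee_fin; apply: Re_tr_ptrace2_le_lambda_max densA.1 (HP n) (Hx n).
by apply: cvg_EFin; [exact: nearW|exact: HC1 A densA].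
Qed.
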